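(* Let $n=12$. There is no permutation sequence $(\pi_1,\ldots,\pi_{12})$ of length $12$ with the following property: for every $t\in[12]$, every $s\ge 1$ with $s+t-1\le 12$, and every player $i\in N$, there exists a day $d\in\{s,s+1,\ldots,s+t-1\}$ with $\pi_d(i)\le \lceil 12/t\rceil$.
   Context: $N$ is a set of $n$ players and $[n]=\{1,\ldots,n\}$ a set of $n$ items (smaller number = better item). A permutation sequence of length $n$ is an ordered tuple $(\pi_1,\ldots,\pi_n)$ of bijections $\pi_d : N\to[n]$; on day $d$ player $i$ receives item $\pi_d(i)$. *)

From mathcomp Require Import all_boot all_fingroup.
Set Implicit Arguments. Unset Strict Implicit. Unset Printing Implicit Defensive.

(* Players N = 'I_n, items [n] = {1..n} represented by 'I_n with item k <-> ordinal k-1.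
   A permutation sequence of length n: days 1..n, day d <-> index d-1 : 'I_n;
   pi d : {perm 'I_n} is the bijection N -> [n]. *)
Definition perm_seq (n : nat) := 'I_n -> {perm 'I_n}.

Definition item_of n (pi : perm_seq n) (d i : 'I_n) : nat := (pi d i).+1.

Definition ceil_div (n t : nat) : nat := (n + t - 1) %/ t.

Definition good_seq n (pi : perm_seq n) : Prop :=
  forall t s : nat, 1 <= t <= n -> 1 <= s -> s + t - 1 <= n ->
  forall i : 'I_n, exists d : 'I_n,
    s <= d.+1 <= s + t - 1 /\ item_of pi d i <= ceil_div n t.

From mathcomp Require Import all_boot all_fingroup.

Set Implicit Arguments.
Unset Strict Implicit.
Unset Printing Implicit Defensive.

(* A window of [w] days hands out [w * k] items among the best [k], so if
   [w * k = n] and every player needs one of them, every player gets exactly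
   one. For n = 12 this holds for days 1-6 with items {1,2} and for days 2-5
   with items {1,2,3}. The two players with an item in {1,2} on day 5 thus get
   nothing in {1,2,3} on days 2-4, so the window of days 1-4 forces them an
   item in {1,2,3} on day 1. They differ from the two players holding items 1
   and 2 on day 1 (by the first uniqueness), giving four players with an item
   in {1,2,3} on day 1. *)

Lemma tight_cover_hit_unique (T D : finType) (pi : D -> {perm T})
    (W : {set D}) (K : {set T}) :
  #|W| * #|K| = #|T| -> (forall i, exists2 d, d \in W & pi d i \in K) ->
  forall i, {in W &, forall d d', pi d i \in K -> pi d' i \in K -> d = d'}.
Proof.
move=> cardWK hit.
have [w hitw] : {w : T -> D | forall i, (w i \in W) && (pi (w i) i \in K)}.
  have hit' i : exists d, (d \in W) && (pi d i \in K).
    by have [d ? ?] := hit i; exists d; apply/andP.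
  by exists (fun i => xchoose (hit' i)) => i; exact: xchooseP (hit' i).
pose h i := (w i, pi (w i) i).
have h_inj : injective h by move=> i j [eqw]; rewrite eqw => /perm_inj.
have h_onto : h @: setT = setX W K.
  apply/eqP; rewrite eqEcard cardsX card_imset // cardsT cardWK leqnn andbT.
  by apply/subsetP => _ /imsetP[i _ ->]; rewrite inE; exact: hitw.
have w_hit d i : d \in W -> pi d i \in K -> w i = d.
  move=> dW piK; have : (d, pi d i) \in h @: setT by rewrite h_onto inE /= dW.
  by case/imsetP => j _ [-> /perm_inj ->].
by move=> i d d' dW d'W hd hd'; rewrite -(w_hit d i) // (w_hit d' i).
Qed.

Definition window n (a t : nat) : {set 'I_n} := [set d : 'I_n | a <= d < a + t].

Lemma card_window n a t :
  #|window n a t| = count (fun d => a <= d < a + t) (iota 0 n).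
Proof. by rewrite cardsE cardE size_filter -val_enum_ord count_map enumT. Qed.

(* Day [d.+1] and item [k.+1] are encoded by the ordinals [d] and [k], so the
   days [s, ..., s + t - 1] of [good_seq] are [window n s.-1 t] and the items
   [1, ..., ceil(n/t)] are [window n 0 (ceil_div n t)]. *)
Lemma good_seq_window_hit n (pi : perm_seq n) t a :
  good_seq pi -> 0 < t -> a + t <= n ->
  forall i, exists2 d, d \in window n a t & pi d i \in window n 0 (ceil_div n t).
Proof.
move=> pi_good t_gt0 at_le_n i.
have t_le_n : t <= n := leq_trans (leq_addl a t) at_le_n.
have t_ok : 0 < t <= n by rewrite t_gt0.
have end_ok : a.+1 + t - 1 <= n by rewrite addSn subn1.
have [d [day_d item_d]] := pi_good t a.+1 t_ok isT end_ok i.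
by exists d; rewrite inE; rewrite addSn subn1 ltnS in day_d.
Qed.

Section TwelvePlayers.

Variable pi : perm_seq 12.
Hypothesis pi_good : good_seq pi.

Lemma top2_hit_unique_days1to6 i :
  {in window 12 0 6 &, forall d d',
    pi d i \in window 12 0 2 -> pi d' i \in window 12 0 2 -> d = d'}.
Proof.
apply: tight_cover_hit_unique i; first by rewrite !card_window card_ord.
exact: good_seq_window_hit.
Qed.

Lemma top3_hit_unique_days2to5 i :
  {in window 12 1 4 &, forall d d',
    pi d i \in window 12 0 3 -> pi d' i \in window 12 0 3 -> d = d'}.
Proof.
apply: tight_cover_hit_unique i; first by rewrite !card_window card_ord.
exact: good_seq_window_hit.
Qed.

Lemma top2_day1_day5_disjoint :
  pi ord0 @^-1: window 12 0 2 :&: pi (inord 4) @^-1: window 12 0 2 = set0.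
Proof.
apply/setP => i; rewrite in_setI in_set0; apply/negbTE/negP => /andP[].
rewrite [i \in _]inE => day1; rewrite [i \in _]inE => day5.
have day1_in : ord0 \in window 12 0 6 by rewrite inE.
have day5_in : inord 4 \in window 12 0 6 by rewrite inE inordK.
move/(congr1 val): (top2_hit_unique_days1to6 day1_in day5_in day1 day5).
by rewrite /= inordK.
Qed.

Lemma top2_day5_sub_top3_day1 :
  pi (inord 4) @^-1: window 12 0 2 \subset pi ord0 @^-1: window 12 0 3.
Proof.
apply/subsetP => i; rewrite [i \in _]inE => top2_day5; rewrite [i \in _]inE.
have top3_day5 : pi (inord 4) i \in window 12 0 3.
  by move: top2_day5; rewrite !inE /= => /ltnW.
have [d days1to4 top3_d] := good_seq_window_hit (t := 4) (a := 0) pi_good isT isT i.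
have [d0 | d_gt0] := posnP d.
  by have -> : ord0 = d by apply: val_inj.
have days2to5 : d \in window 12 1 4.
  by move: days1to4; rewrite !inE d_gt0 /= => /ltnW.
have day5_in : inord 4 \in window 12 1 4 by rewrite inE inordK.
move/(congr1 val): (top3_hit_unique_days2to5 days2to5 day5_in top3_d top3_day5).
by rewrite /= inordK // => d4; rewrite inE d4 in days1to4.
Qed.

End TwelvePlayers.

Theorem mainTheorem8 : ~ exists pi : perm_seq 12, good_seq pi.
Proof.
case=> pi pi_good.
have top2_sub_top3 : window 12 0 2 \subset window 12 0 3.
  by apply/subsetP => k; rewrite !inE => /ltnW.
have top2_day1_day5_sub_top3_day1 :
  pi ord0 @^-1: window 12 0 2 :|: pi (inord 4) @^-1: window 12 0 2
    \subset pi ord0 @^-1: window 12 0 3.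
  by rewrite subUset preimsetS // top2_day5_sub_top3_day1.
have := subset_leq_card top2_day1_day5_sub_top3_day1.
rewrite cardsU top2_day1_day5_disjoint // cards0.
by rewrite !(card_preimset _ perm_inj) !card_window.
Qed.
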